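(* The ratio $\frac{\psi_2(x)}{\psi_1(x)}$ is strictly increasing for $x\ge1$.
   Context: For $x\ge1$, $\psi_1(x)=\frac32\int_0^{\pi/2}(1-x^{-2}\sin^2u)^{3/2}\,du$ and $\psi_2(x)=\frac32(1-x^{-2})^2\int_0^{\pi/2}\frac{\sin^4v}{\sqrt{1-(1-x^{-2})\sin^2v}}\,dv$. *)

From Stdlib Require Import Reals.
From Coquelicot Require Import Coquelicot.
Open Scope R_scope.

(* psi_1(x) = 3/2 * int_0^{pi/2} (1 - x^{-2} sin^2 u)^{3/2} du,
   with t^{3/2} written as t * sqrt t (t >= 0 here since x >= 1). *)
Definition psi1 (x : R) : R :=
  3/2 * RInt (fun u => let t := 1 - (sin u)^2 / x^2 in t * sqrt t) 0 (PI/2).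

Definition psi2 (x : R) : R :=
  3/2 * (1 - / x^2)^2 *
  RInt (fun v => (sin v)^4 / sqrt (1 - (1 - / x^2) * (sin v)^2)) 0 (PI/2).

(* With a = 1 - x^-2, which increases from 0 to 1 on [1, +oo), psi1 is
   3/2 D(a) and psi2 is 3/2 a^2 J(a), where D integrates the 3/2-power of
   delta a u = cos^2 u + a sin^2 u and J is nondecreasing in a.  Pointwise
   a delta_b <= b delta_a, hence a^(3/2) D(b) <= b^(3/2) D(a); multiplying by
   sqrt a < sqrt b shows that a^2 / D(a) is strictly increasing. *)
From Stdlib Require Import Reals Lra.
From Coquelicot Require Import Coquelicot.
Open Scope R_scope.

Definition pow3_2 (t : R) : R := t * sqrt t.

Definition delta (a u : R) : R := 1 - (1 - a) * sin u ^ 2.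

Definition psi1_int (a : R) : R := RInt (fun u => pow3_2 (delta a u)) 0 (PI/2).

Definition psi2_int (a : R) : R :=
  RInt (fun v => sin v ^ 4 / sqrt (1 - a * sin v ^ 2)) 0 (PI/2).

Definition psi_param (x : R) : R := 1 - / x ^ 2.

Lemma pow3_2_gt0 t : 0 < t -> 0 < pow3_2 t.
Proof. intros Ht. apply Rmult_lt_0_compat; [exact Ht | apply sqrt_lt_R0, Ht]. Qed.

Lemma pow3_2_le s t : 0 <= s <= t -> pow3_2 s <= pow3_2 t.
Proof.
  intros Hst. apply Rmult_le_compat; try lra; try apply sqrt_pos.
  apply sqrt_le_1_alt; lra.
Qed.

Lemma pow3_2_mult s t : 0 <= s -> 0 <= t -> pow3_2 (s * t) = pow3_2 s * pow3_2 t.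
Proof. intros Hs Ht. unfold pow3_2. rewrite sqrt_mult by assumption. ring. Qed.

Lemma sqrt_mul_pow3_2 t : 0 <= t -> sqrt t * pow3_2 t = t ^ 2.
Proof.
  intros Ht. unfold pow3_2.
  replace (sqrt t * (t * sqrt t)) with (t * (sqrt t * sqrt t)) by ring.
  rewrite sqrt_sqrt by exact Ht. ring.
Qed.

Lemma continuous_pow3_2_comp (f : R -> R) x :
  continuous f x -> continuous (fun y => pow3_2 (f y)) x.
Proof.
  intros Hf. apply (continuous_mult f (fun y => sqrt (f y))); [exact Hf |].
  apply continuous_sqrt_comp, Hf.
Qed.

Lemma sin_sqr_bound u : 0 <= sin u ^ 2 <= 1.
Proof. pose proof (SIN_bound u). nra. Qed.

Lemma delta_ge0 a u : 0 <= a -> 0 <= delta a u.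
Proof. intros Ha. unfold delta. pose proof (sin_sqr_bound u). nra. Qed.

Lemma delta_gt0 a u : 0 <= a -> 0 < u < PI/2 -> 0 < delta a u.
Proof.
  intros Ha Hu. pose proof (cos_gt_0 u ltac:(lra) ltac:(lra)) as Hcos.
  pose proof (sin2_cos2 u) as Hpyth. unfold Rsqr in Hpyth.
  pose proof (sin_sqr_bound u). unfold delta. nra.
Qed.

Lemma delta_scale a b u : 0 <= a <= b -> a * delta b u <= b * delta a u.
Proof.
  intros Hab. pose proof (sin_sqr_bound u).
  assert (E : b * delta a u - a * delta b u = (b - a) * (1 - sin u ^ 2))
    by (unfold delta; ring).
  nra.
Qed.

Lemma continuous_delta a u : continuous (delta a) u.
Proof.
  apply (@ex_derive_continuous R_AbsRing R_NormedModule).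
  unfold delta; auto_derive; auto.
Qed.

Lemma continuous_psi2_integrand a v : a < 1 ->
  continuous (fun v => sin v ^ 4 / sqrt (1 - a * sin v ^ 2)) v.
Proof.
  intros Ha. apply (@ex_derive_continuous R_AbsRing R_NormedModule).
  pose proof (sin_sqr_bound v).
  assert (Hp : 0 < 1 - a * sin v ^ 2) by (destruct (Rle_or_lt 0 a); nra).
  auto_derive. simpl in Hp. repeat split; try lra.
  apply Rgt_not_eq, sqrt_lt_R0. lra.
Qed.

Lemma ex_RInt_psi1_integrand a :
  ex_RInt (fun u => pow3_2 (delta a u)) 0 (PI/2).
Proof.
  apply (@ex_RInt_continuous R_CompleteNormedModule); intros u _.
  apply continuous_pow3_2_comp, continuous_delta.
Qed.

Lemma ex_RInt_psi2_integrand a : a < 1 ->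
  ex_RInt (fun v => sin v ^ 4 / sqrt (1 - a * sin v ^ 2)) 0 (PI/2).
Proof.
  intros Ha. apply (@ex_RInt_continuous R_CompleteNormedModule); intros v _.
  apply continuous_psi2_integrand, Ha.
Qed.

Lemma psi1_int_gt0 a : 0 <= a -> 0 < psi1_int a.
Proof.
  intros Ha. apply RInt_gt_0.
  - pose proof PI_RGT_0; lra.
  - intros u Hu. apply pow3_2_gt0, delta_gt0; assumption.
  - intros u _. apply continuous_pow3_2_comp, continuous_delta.
Qed.

Lemma psi2_int_gt0 a : 0 <= a < 1 -> 0 < psi2_int a.
Proof.
  intros Ha. apply RInt_gt_0.
  - pose proof PI_RGT_0; lra.
  - intros v Hv. pose proof (sin_sqr_bound v).
    assert (0 < sin v) by (apply sin_gt_0; lra).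
    apply Rdiv_lt_0_compat; [apply pow_lt; assumption |].
    apply sqrt_lt_R0. nra.
  - intros v _. apply continuous_psi2_integrand. lra.
Qed.

Lemma psi2_int_le a b : 0 <= a <= b -> b < 1 -> psi2_int a <= psi2_int b.
Proof.
  intros Hab Hb. pose proof PI_RGT_0.
  apply RInt_le; try apply ex_RInt_psi2_integrand; try lra.
  intros v _. pose proof (sin_sqr_bound v).
  assert (0 <= sin v ^ 4) by (replace (sin v ^ 4) with ((sin v ^ 2) ^ 2) by ring; apply pow2_ge_0).
  apply Rmult_le_compat_l; [assumption |].
  apply Rinv_le_contravar; [apply sqrt_lt_R0; nra |].
  apply sqrt_le_1_alt. nra.
Qed.

Lemma psi1_int_scale a b : 0 <= a <= b ->
  pow3_2 a * psi1_int b <= pow3_2 b * psi1_int a.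
Proof.
  intros Hab. pose proof PI_RGT_0. unfold psi1_int.
  rewrite <- !(RInt_scal (V := R_CompleteNormedModule)) by apply ex_RInt_psi1_integrand.
  apply RInt_le; try lra;
    try apply (ex_RInt_scal (V := R_NormedModule)), ex_RInt_psi1_integrand.
  intros u _. change (pow3_2 a * pow3_2 (delta b u) <= pow3_2 b * pow3_2 (delta a u)).
  pose proof (delta_ge0 a u ltac:(lra)). pose proof (delta_ge0 b u ltac:(lra)).
  rewrite <- !pow3_2_mult by lra.
  apply pow3_2_le. split; [apply Rmult_le_pos; lra | apply delta_scale, Hab].
Qed.

Lemma psi1_int_sqr_scale a b : 0 <= a < b ->
  a ^ 2 * psi1_int b < b ^ 2 * psi1_int a.
Proof.
  intros Hab.
  pose proof (psi1_int_gt0 a ltac:(lra)). pose proof (pow3_2_gt0 b ltac:(lra)).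
  pose proof (psi1_int_scale a b ltac:(lra)) as Hscale.
  assert (Hsqrt : sqrt a < sqrt b) by (apply sqrt_lt_1_alt; lra).
  rewrite <- (sqrt_mul_pow3_2 a), <- (sqrt_mul_pow3_2 b) by lra.
  apply Rle_lt_trans with (sqrt a * (pow3_2 b * psi1_int a)).
  - rewrite Rmult_assoc. apply Rmult_le_compat_l; [apply sqrt_pos | exact Hscale].
  - rewrite Rmult_assoc. apply Rmult_lt_compat_r; [nra | exact Hsqrt].
Qed.

Lemma psi_ratio_increasing a b : 0 <= a < b -> b < 1 ->
  a ^ 2 * psi2_int a / psi1_int a < b ^ 2 * psi2_int b / psi1_int b.
Proof.
  intros Hab Hb.
  pose proof (psi1_int_gt0 a ltac:(lra)). pose proof (psi1_int_gt0 b ltac:(lra)).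
  pose proof (psi2_int_gt0 a ltac:(lra)).
  pose proof (psi2_int_le a b ltac:(lra) Hb).
  pose proof (psi1_int_sqr_scale a b Hab).
  assert (0 <= b ^ 2 * psi1_int a) by (apply Rmult_le_pos; [apply pow2_ge_0 | lra]).
  apply Rmult_lt_reg_r with (psi1_int a * psi1_int b); [nra |].
  field_simplify; try lra. nra.
Qed.

Lemma psi1_eq x : x <> 0 -> psi1 x = 3/2 * psi1_int (psi_param x).
Proof.
  intros Hx. unfold psi1, psi1_int, psi_param. f_equal. apply RInt_ext. intros u _.
  unfold pow3_2, delta.
  replace (1 - (1 - (1 - / x ^ 2)) * sin u ^ 2) with (1 - sin u ^ 2 / x ^ 2);
    [reflexivity | field; exact Hx].
Qed.

Lemma psi2_eq x : psi2 x = 3/2 * psi_param x ^ 2 * psi2_int (psi_param x).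
Proof. reflexivity. Qed.

Lemma psi_param_range x : 1 <= x -> 0 <= psi_param x < 1.
Proof.
  intros Hx. unfold psi_param.
  assert (0 < / x ^ 2 <= 1); [| lra].
  split; [apply Rinv_0_lt_compat, pow_lt; lra |].
  rewrite <- Rinv_1. apply Rinv_le_contravar; [lra |]. nra.
Qed.

Lemma psi_param_lt x y : 1 <= x -> x < y -> psi_param x < psi_param y.
Proof.
  intros Hx Hxy. unfold psi_param.
  enough (/ y ^ 2 < / x ^ 2) by lra.
  apply Rinv_lt_contravar; [apply Rmult_lt_0_compat; apply pow_lt |]; nra.
Qed.

Lemma psi_ratio_eq x : 1 <= x ->
  psi2 x / psi1 x = psi_param x ^ 2 * psi2_int (psi_param x) / psi1_int (psi_param x).
Proof.
  intros Hx. rewrite psi1_eq, psi2_eq by lra.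
  pose proof (psi1_int_gt0 _ (proj1 (psi_param_range x Hx))).
  field. lra.
Qed.

Theorem mainTheorem18 :
  forall x y : R, 1 <= x -> x < y -> psi2 x / psi1 x < psi2 y / psi1 y.
Proof.
  intros x y Hx Hxy.
  rewrite !psi_ratio_eq by lra.
  apply psi_ratio_increasing.
  - split; [apply psi_param_range, Hx | apply psi_param_lt; assumption].
  - apply psi_param_range. lra.
Qed.
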